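(* Let $\mathcal{C}$ be a set of node-disjoint chains and $T$ a time function for $\mathcal{C}$, and let $G=\mathcal{G}^{\mathcal{C},T}_{\mathrm{perf}}$. Then for every set $\mathcal{C}'$ of node-disjoint chains with $\bigcup_{C\in\mathcal{C}'}V(C)=V(G)$ having the same set of sources as $\mathcal{C}$, and every time function $T'$ for $\mathcal{C}'$ such that $G\in\mathcal{G}^{\mathcal{C}',T'}$, we have $T'(v)=T(v)$ for all $v\in V(G)$.
   Context: A chain is a directed path graph with source (start node) and sink (end node); for a non-sink $v$, $v+1$ is its out-neighbor in the chain. For node-disjoint chains $\mathcal{C}=\{C_1,\ldots,C_m\}$, $V=\bigcup_iV(C_i)$, $\gamma=|V|-m+1$, a time function is $T:V\to\{1,\ldots,\gamma\}$ with (1) $T(v)=1$ for every source; (2) distinct non-source nodes get distinct values; (3) $T(v)<T(v+1)$ for non-sink $v$. $T_{\max}(v)=\gamma$ for a sink $v$, else $T_{\max}(v)=T(v+1)-1$. $\mathcal{G}^{\mathcal{C},T}$ is the set of directed graphs $G$ (self-loops allowed) with $V(G)=V$, $\bigcup_iE(C_i)\subseteq E(G)$, and $(u,v)\notin E(G)$ whenever $(u,v)\notin\bigcup_iE(C_i)$ and $T_{\max}(u)<T(v)$. The perfect $(\mathcal{C},T)$-constructed graph $\mathcal{G}^{\mathcal{C},T}_{\mathrm{perf}}$ is the graph with node set $V$ and edge set $E_{\mathrm{perf}}=\bigcup_iE(C_i)\cup\{(u,v)\in V\times V: T_{\max}(u)\geq T(v)\}$. *)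

From mathcomp Require Import all_boot.
Set Implicit Arguments. Unset Strict Implicit. Unset Printing Implicit Defensive.

Section Chains.
Variable V : finType.

(* A family of chains is a list of chains; each chain is the (nonempty)
   sequence of its nodes from source to sink. *)
Definition chain_family (C : seq (seq V)) : bool :=
  all (fun c => c != [::]) C && uniq (flatten C).

Definition covers (C : seq (seq V)) : Prop := forall v : V, v \in flatten C.

(* (u, v) is an edge of some chain, i.e. v = u + 1 *)
Definition chain_edge (C : seq (seq V)) (u v : V) : bool :=
  has (fun c => (u, v) \in zip c (behead c)) C.

Definition is_source (C : seq (seq V)) (v : V) : bool :=
  has (fun c => ohead c == Some v) C.

Definition olast (c : seq V) : option V :=
  if c is x :: s then Some (last x s) else None.

Definition is_sink (C : seq (seq V)) (v : V) : bool :=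
  has (fun c => olast c == Some v) C.

Definition gamma (C : seq (seq V)) : nat := #|V| - size C + 1.

Definition time_function (C : seq (seq V)) (T : V -> nat) : Prop :=
  (forall v, 1 <= T v <= gamma C) /\
  (forall v, is_source C v -> T v = 1) /\
  (forall u v, ~~ is_source C u -> ~~ is_source C v -> u != v -> T u != T v) /\
  (forall u v, chain_edge C u v -> T u < T v).

Definition Tmax (C : seq (seq V)) (T : V -> nat) (v : V) : nat :=
  if is_sink C v then gamma C
  else match [pick w | chain_edge C v w] with
       | Some w => (T w).-1
       | None => gamma C
       end.

(* G (given by its edge relation on V, self-loops allowed) lies in G^{C,T} *)
Definition in_GCT (C : seq (seq V)) (T : V -> nat) (E : rel V) : Prop :=
  (forall u v, chain_edge C u v -> E u v) /\
  (forall u v, ~~ chain_edge C u v -> Tmax C T u < T v -> ~~ E u v).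

Definition perf_graph (C : seq (seq V)) (T : V -> nat) : rel V :=
  fun u v => chain_edge C u v || (T v <= Tmax C T u).

End Chains.

(* For a non-source x, the vertices u with no edge u -> x in the perfect graph of (C, T) are
   exactly the chain predecessors of the non-sources w with T w < T x.  Since T maps the
   non-sources bijectively onto {2, ..., gamma}, there are T x - 2 of them.  A graph of
   G^{C',T'} has at least T' x - 2 such vertices, so T' x <= T x on non-sources.  Both
   time functions are injective on the common non-sources and T hits every value in
   {2, ..., gamma}, so strong induction on T x turns this inequality into equality. *)

From mathcomp Require Import all_boot zify.
Set Implicit Arguments. Unset Strict Implicit. Unset Printing Implicit Defensive.

Section ConsecutivePairs.
Variable T : eqType.
Implicit Types s : seq T.

Lemma mem_zip_beheadP x0 s u v :
  reflect (exists2 i, i.+1 < size s & (nth x0 s i, nth x0 s i.+1) = (u, v))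
          ((u, v) \in zip s (behead s)).
Proof.
have lt_zs i : (i < size (zip s (behead s))) = (i.+1 < size s).
  by rewrite size_zip size_behead (minn_idPr (leq_pred _)) ltn_predRL.
have nth_zs i : i.+1 < size s ->
    nth (x0, x0) (zip s (behead s)) i = (nth x0 s i, nth x0 s i.+1).
  by move=> lt_i; rewrite nth_zip_cond lt_zs lt_i nth_behead.
apply: (iffP (nthP (x0, x0))) => -[i + <-]; rewrite ?lt_zs => lt_i;
  by exists i; rewrite ?lt_zs // nth_zs.
Qed.

Lemma mem_zip_behead s u v : (u, v) \in zip s (behead s) -> (u \in s) && (v \in s).
Proof. by case/(mem_zip_beheadP u) => i lt_i [<- <-]; rewrite !mem_nth // ltnW. Qed.

Lemma zip_behead_functional s u v w : uniq s ->
  (u, v) \in zip s (behead s) -> (u, w) \in zip s (behead s) -> v = w.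
Proof.
move=> s_uniq /(mem_zip_beheadP u) [i lt_i [ui <-]] /(mem_zip_beheadP u) [j lt_j [uj <-]].
have /eqP : nth u s i = nth u s j by rewrite ui uj.
by rewrite nth_uniq ?(ltnW lt_i) ?(ltnW lt_j) // => /eqP->.
Qed.

Lemma zip_behead_injective s u v w : uniq s ->
  (u, w) \in zip s (behead s) -> (v, w) \in zip s (behead s) -> u = v.
Proof.
move=> s_uniq /(mem_zip_beheadP w) [i lt_i [<- wi]] /(mem_zip_beheadP w) [j lt_j [<- wj]].
have /eqP : nth w s i.+1 = nth w s j.+1 by rewrite wi wj.
by rewrite nth_uniq // => /eqP[->].
Qed.

Lemma zip_behead_not_last x0 s u w : uniq s ->
  (u, w) \in zip s (behead s) -> last x0 s != u.
Proof.
move=> s_uniq /(mem_zip_beheadP x0) [i lt_i [<- _]].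
by rewrite -nth_last nth_uniq ?(ltnW lt_i) ?prednK ?(ltn_trans _ lt_i) //; lia.
Qed.

Lemma zip_behead_pred s w :
  w \in s -> ohead s != Some w -> exists u, (u, w) \in zip s (behead s).
Proof.
case: s => [|a r] // w_s; rewrite /= (inj_eq Some_inj) => a_w.
have lt_w : 0 < index w (a :: r) < size (a :: r).
  by rewrite index_mem w_s /= (negPf a_w).
exists (nth a (a :: r) (index w (a :: r)).-1); apply/(mem_zip_beheadP a).
by exists (index w (a :: r)).-1; rewrite ?prednK ?nth_index //; case/andP: lt_w.
Qed.

Lemma zip_behead_succ x0 s u :
  u \in s -> last x0 s != u -> exists w, (u, w) \in zip s (behead s).
Proof.
move=> u_s u_last; have lt_u : (index u s).+1 < size s.
  rewrite ltn_neqAle index_mem u_s andbT; apply: contraNneq u_last => size_s.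
  by rewrite -nth_last -size_s nth_index.
exists (nth x0 s (index u s).+1); apply/(mem_zip_beheadP x0).
by exists (index u s); rewrite ?nth_index.
Qed.

End ConsecutivePairs.

Lemma uniq_image_in (T : finType) (T' : eqType) (A : {pred T}) (f : T -> T') :
  {in A &, injective f} -> uniq [seq f x | x in A].
Proof.
by move=> f_inj; rewrite map_inj_in_uniq ?enum_uniq // => x y; rewrite !mem_enum; apply: f_inj.
Qed.

Section InjectionIntoInterval.
Variables (T : finType) (A : {pred T}) (f : T -> nat) (m : nat).
Hypotheses (f_inj : {in A &, injective f}) (f_range : {in A, forall x, m <= f x < m + #|A|}).

Lemma perm_image_iota : perm_eq [seq f x | x in A] (iota m #|A|).
Proof.
have sub : {subset [seq f x | x in A] <= iota m #|A|}.
  by move=> _ /imageP[x xA ->]; rewrite mem_iota f_range.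
have le_size : size (iota m #|A|) <= size [seq f x | x in A].
  by rewrite size_image size_iota.
have [_ eq_img] := uniq_min_size (uniq_image_in f_inj) sub le_size.
exact: uniq_perm (uniq_image_in f_inj) (iota_uniq _ _) eq_img.
Qed.

Lemma card_image_below n : n <= m + #|A| -> #|[set x in A | f x < n]| = n - m.
Proof.
move=> le_n; set B := [set x in A | f x < n].
have f_injB : {in B &, injective f}.
  by move=> x y; rewrite !inE => /andP[xA _] /andP[yA _]; apply: f_inj.
have img_B : [seq f x | x in B] =i iota m (n - m).
  move=> j; rewrite mem_iota; apply/imageP/idP => [[x] | j_range].
    by rewrite inE => /andP[/f_range x_range lt_x] ->; lia.
  have : j \in iota m #|A| by rewrite mem_iota; lia.
  rewrite -(perm_mem perm_image_iota) => /imageP[x xA fx].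
  by exists x; rewrite // inE xA -fx; lia.
rewrite -(size_image f) -(size_iota m (n - m)).
exact/perm_size/uniq_perm/img_B/iota_uniq/uniq_image_in.
Qed.

End InjectionIntoInterval.

Lemma eq_in_leq_inj (T : Type) (A : {pred T}) (f g : T -> nat) :
    {in A &, injective f} -> {in A, forall x, f x <= g x} ->
    {in A, forall x, exists2 y, y \in A & g y = f x} -> {in A, f =1 g}.
Proof.
move=> f_inj le_fg f_img.
suff eq_at n : {in A, forall x, g x = n -> f x = g x} by move=> x xA; apply: eq_at.
elim/ltn_ind: n => n IH x xA gx; apply/eqP; rewrite eqn_leq le_fg //= leqNgt.
apply/negP => lt_fg; have [y yA gy] := f_img x xA.
have fy : f y = f x by rewrite (IH (g y)) ?gy -?gx.
by move: lt_fg; rewrite -gy (f_inj _ _ yA xA fy) ltnn.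
Qed.

Lemma card_rel_dom_codom (T : finType) (R : rel T) :
    (forall u v w, R u v -> R u w -> v = w) ->
    (forall u v w, R u w -> R v w -> u = v) ->
  #|[set u | [exists v, R u v]]| = #|[set v | [exists u, R u v]]|.
Proof.
move=> R_fun R_inj; set P := [set p : T * T | R p.1 p.2].
have -> : [set u | [exists v, R u v]] = fst @: P.
  apply/setP => u; rewrite inE; apply/existsP/imsetP => [[v Ruv] | [[u' v] Ruv ->]].
    by exists (u, v); rewrite ?inE.
  by exists v; rewrite inE in Ruv.
have -> : [set v | [exists u, R u v]] = snd @: P.
  apply/setP => v; rewrite inE; apply/existsP/imsetP => [[u Ruv] | [[u v'] Ruv ->]].
    by exists (u, v); rewrite ?inE.
  by exists u; rewrite inE in Ruv.
rewrite !card_in_imset // => -[u1 v1] [u2 v2]; rewrite !inE /= => R1 R2 eq12.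
  by rewrite eq12 in R1 *; rewrite (R_inj _ _ _ R1 R2).
by rewrite eq12 in R1 *; rewrite (R_fun _ _ _ R1 R2).
Qed.

Lemma uniq_flatten_mem (T : eqType) (ss : seq (seq T)) s :
  uniq (flatten ss) -> s \in ss -> uniq s.
Proof.
elim: ss => [|s0 ss IH] //=; rewrite cat_uniq in_cons => /and3P[s0_uniq _ ss_uniq].
by case/predU1P => [-> | /IH]; auto.
Qed.

Lemma uniq_flatten_eq (T : eqType) (ss : seq (seq T)) s1 s2 x :
  uniq (flatten ss) -> s1 \in ss -> s2 \in ss -> x \in s1 -> x \in s2 -> s1 = s2.
Proof.
elim: ss => [|s0 ss IH] //=; rewrite cat_uniq => /and3P[_ disj ss_uniq].
have notin_ss s : s \in ss -> x \in s -> x \notin s0.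
  move=> s_ss xs; apply: contraNN disj => x_s0.
  by apply/hasP; exists x => //; apply/flattenP; exists s.
rewrite !in_cons => /predU1P[-> | s1_ss] /predU1P[-> | s2_ss] //.
- by move=> x_s0 /(notin_ss _ s2_ss); rewrite x_s0.
- by move=> /(notin_ss _ s1_ss) /negPf->.
- exact: IH.
Qed.

Lemma subseq_heads_flatten (T : eqType) (ss : seq (seq T)) :
  subseq (pmap ohead ss) (flatten ss).
Proof.
elim: ss => [|[|a s] ss IH] //=; rewrite eqxx.
exact: subseq_trans IH (suffix_subseq _ _).
Qed.

Section ChainFamily.
Variables (V : finType) (C : seq (seq V)).
Hypothesis C_family : chain_family C.

Let C_uniq : uniq (flatten C). Proof. by case/andP: C_family. Qed.

Lemma chain_edge_functional u v w : chain_edge C u v -> chain_edge C u w -> v = w.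
Proof.
case/hasP=> c1 c1C e1 /hasP[c2 c2C e2].
have /andP[u_c1 _] := mem_zip_behead e1; have /andP[u_c2 _] := mem_zip_behead e2.
rewrite (uniq_flatten_eq C_uniq c1C c2C u_c1 u_c2) in e1.
exact: zip_behead_functional (uniq_flatten_mem C_uniq c2C) e1 e2.
Qed.

Lemma chain_edge_injective u v w : chain_edge C u w -> chain_edge C v w -> u = v.
Proof.
case/hasP=> c1 c1C e1 /hasP[c2 c2C e2].
have /andP[_ w_c1] := mem_zip_behead e1; have /andP[_ w_c2] := mem_zip_behead e2.
rewrite (uniq_flatten_eq C_uniq c1C c2C w_c1 w_c2) in e1.
exact: zip_behead_injective (uniq_flatten_mem C_uniq c2C) e1 e2.
Qed.

Lemma chain_edge_not_sink u w : chain_edge C u w -> ~~ is_sink C u.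
Proof.
case/hasP=> c cC e; apply/hasP => -[[|a r] //= arC /eqP[last_u]].
have /andP[u_c _] := mem_zip_behead e.
have u_ar : u \in a :: r by rewrite -last_u mem_last.
rewrite (uniq_flatten_eq C_uniq cC arC u_c u_ar) in e.
by have := zip_behead_not_last a (uniq_flatten_mem C_uniq arC) e; rewrite /= last_u eqxx.
Qed.

Lemma card_sources : #|[set v | is_source C v]| = size C.
Proof.
have -> : [set v | is_source C v] = [set v in pmap ohead C].
  by apply/setP => v; rewrite !inE mem_pmap -has_pred1 has_map.
rewrite cardsE (card_uniqP (subseq_uniq (subseq_heads_flatten C) C_uniq)).
rewrite size_pmap -(count_predT C); apply: eq_in_count => c.
by case/andP: C_family => /allP ne _ /ne; case: c.
Qed.

Hypothesis C_cover : covers C.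

Lemma chain_edge_to w : ~~ is_source C w -> exists u, chain_edge C u w.
Proof.
move=> /hasPn w_ns; have /flattenP[c cC w_c] := C_cover w.
have [u e] := zip_behead_pred w_c (w_ns c cC).
by exists u; apply/hasP; exists c.
Qed.

Lemma chain_edge_from u : ~~ is_sink C u -> exists w, chain_edge C u w.
Proof.
move=> /hasPn u_ns; have /flattenP[c cC u_c] := C_cover u.
case: c cC u_c => [|a r] arC; rewrite ?in_nil // => u_ar.
have /= := u_ns _ arC; rewrite (inj_eq Some_inj) => last_u.
have [w e] := zip_behead_succ (x0 := a) u_ar last_u.
by exists w; apply/hasP; exists (a :: r).
Qed.

End ChainFamily.

Section TimeFunction.
Variables (V : finType) (C : seq (seq V)) (T : V -> nat).
Hypotheses (C_family : chain_family C) (C_cover : covers C).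
Hypothesis T_time : time_function C T.

Lemma time_bounds v : 1 <= T v <= gamma C.
Proof. by case: T_time => bounds _; apply: bounds. Qed.

Lemma time_source v : is_source C v -> T v = 1.
Proof. by case: T_time => _ [src _]; apply: src. Qed.

Lemma time_inj : {in [pred v | ~~ is_source C v] &, injective T}.
Proof.
move=> u v u_ns v_ns; apply: contra_eq.
by case: T_time => _ [_ [distinct _]]; apply: distinct.
Qed.

Lemma time_chain_edge u v : chain_edge C u v -> T u < T v.
Proof. by case: T_time => _ [_ [_ incr]]; apply: incr. Qed.

Lemma chain_edge_non_source u w : chain_edge C u w -> ~~ is_source C w.
Proof.
move=> e; apply: contraTN (time_chain_edge e) => /time_source->.
by rewrite -leqNgt; case/andP: (time_bounds u).
Qed.

Lemma time_non_source v : ~~ is_source C v -> 2 <= T v.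
Proof.
case/(chain_edge_to C_cover) => u /time_chain_edge.
by apply: leq_trans; case/andP: (time_bounds u).
Qed.

Let NS := [pred v | ~~ is_source C v].

Lemma card_non_sources : #|NS| = (gamma C).-1.
Proof.
have := cardsC [set v | is_source C v]; rewrite (card_sources C_family).
have -> : #|~: [set v | is_source C v]| = #|NS| by apply: eq_card => v; rewrite !inE.
by rewrite /gamma; lia.
Qed.

Lemma time_range : {in NS, forall v, 2 <= T v < 2 + #|NS|}.
Proof.
move=> v v_ns; rewrite time_non_source // card_non_sources.
by have := time_bounds v; lia.
Qed.

Lemma time_surj k : 2 <= k <= gamma C -> exists2 v, ~~ is_source C v & T v = k.
Proof.
move=> k_range; have : k \in iota 2 #|NS| by rewrite mem_iota card_non_sources; lia.
rewrite -(perm_mem (perm_image_iota time_inj time_range)) => /imageP[v v_ns ->].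
by exists v.
Qed.

Lemma card_time_below n : n <= gamma C -> #|[set v in NS | T v < n]| = n - 2.
Proof.
by move=> le_n; apply: (card_image_below time_inj time_range); rewrite card_non_sources; lia.
Qed.

Lemma Tmax_sink u : is_sink C u -> Tmax C T u = gamma C.
Proof. by rewrite /Tmax => ->. Qed.

Lemma Tmax_chain_edge u w : chain_edge C u w -> Tmax C T u = (T w).-1.
Proof.
move=> e; rewrite /Tmax (negPf (chain_edge_not_sink C_family e)).
case: pickP => [w' e' | no_succ]; first by rewrite (chain_edge_functional C_family e' e).
by move: (no_succ w); rewrite e.
Qed.

Lemma not_perf_graphE x u : ~~ is_source C x ->
  ~~ perf_graph C T u x = [exists w, chain_edge C u w && (T w < T x)].
Proof.
move=> x_ns; apply/idP/existsP => [|[w /andP[e lt_wx]]].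
  rewrite /perf_graph negb_or -ltnNge => /andP[not_ux lt_max].
  have [u_sink | /(chain_edge_from C_cover)[w e]] := boolP (is_sink C u).
    by move: lt_max; rewrite Tmax_sink // ltnNge; case/andP: (time_bounds x) => _ ->.
  exists w; rewrite e /=; rewrite (Tmax_chain_edge e) in lt_max.
  have ne_wx : w != x by apply: contraNneq not_ux => <-.
  have := contra_neq (time_inj (chain_edge_non_source e) x_ns) ne_wx.
  by have := time_non_source (chain_edge_non_source e); lia.
rewrite /perf_graph negb_or (Tmax_chain_edge e) -ltnNge; apply/andP; split.
  by apply: contraTN lt_wx => /(chain_edge_functional C_family e)->; rewrite ltnn.
exact: leq_ltn_trans (leq_pred _) lt_wx.
Qed.

Lemma card_not_perf_graph x : ~~ is_source C x ->
  #|[set u | ~~ perf_graph C T u x]| = T x - 2.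
Proof.
move=> x_ns; pose R u w := chain_edge C u w && (T w < T x).
have -> : [set u | ~~ perf_graph C T u x] = [set u | [exists w, R u w]].
  by apply/setP => u; rewrite !inE not_perf_graphE.
rewrite card_rel_dom_codom => [|u v w /andP[e1 _] /andP[e2 _]|u v w /andP[e1 _] /andP[e2 _]].
- have -> : [set w | [exists u, R u w]] = [set w in NS | T w < T x].
    apply/setP => w; rewrite !inE; apply/existsP/andP => [[u /andP[e lt_wx]] | [w_ns lt_wx]].
      by rewrite (chain_edge_non_source e).
    by have [u e] := chain_edge_to C_cover w_ns; exists u; rewrite /R e.
  by rewrite card_time_below //; case/andP: (time_bounds x).
- exact: (chain_edge_functional C_family e1 e2).
- exact: (chain_edge_injective C_family e1 e2).
Qed.

End TimeFunction.

Lemma in_GCT_card_non_edges (V : finType) (C : seq (seq V)) (T : V -> nat) (E : rel V) x :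
    chain_family C -> covers C -> time_function C T -> in_GCT C T E ->
    ~~ is_source C x ->
  T x - 2 <= #|[set u | ~~ E u x]|.
Proof.
move=> C_family C_cover T_time [_ no_edge] x_ns.
rewrite -(card_not_perf_graph C_family C_cover T_time x_ns).
apply/subset_leq_card/subsetP => u.
by rewrite !inE /perf_graph negb_or -ltnNge => /andP[]; apply: no_edge.
Qed.

Theorem proposition2 (V : finType) (C : seq (seq V)) (T : V -> nat)
  (hC : chain_family C) (hCcov : covers C) (hT : time_function C T)
  (C' : seq (seq V)) (T' : V -> nat)
  (hC' : chain_family C') (hC'cov : covers C')
  (hsrc : forall v, is_source C' v = is_source C v)
  (hT' : time_function C' T')
  (hG : in_GCT C' T' (perf_graph C T)) :
  forall v : V, T' v = T v.
Proof.
move=> v; have [v_src | v_ns] := boolP (is_source C v).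
  by rewrite (time_source hT v_src) (time_source hT') ?hsrc.
have le_T'T x : ~~ is_source C x -> T' x <= T x.
  move=> x_ns; have x_ns' : ~~ is_source C' x by rewrite hsrc.
  have := in_GCT_card_non_edges hC' hC'cov hT' hG x_ns'.
  rewrite (card_not_perf_graph hC hCcov hT x_ns).
  by have := time_non_source hC'cov hT' x_ns'; have := time_non_source hCcov hT x_ns; lia.
apply: (eq_in_leq_inj (A := [pred x | ~~ is_source C x])) v_ns => [x y | x x_ns |].
- by rewrite !inE -!hsrc; apply: (time_inj hT').
- exact: le_T'T.
- move=> x x_ns; apply: (time_surj hC hCcov hT).
  have := time_non_source hC'cov hT' (v := x); rewrite hsrc => /(_ x_ns).
  by have := le_T'T x x_ns; case/andP: (time_bounds hT x); lia.
Qed.
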